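(* Let $p,q$ be positive integers and let $\mathbb T$ be a finite rooted tree whose root has at most $q$ children, in which every other vertex in an even layer has at most $q$ children and every vertex in an odd layer has at most $p$ children. Then its adjacency matrix $A^{\mathbb T}$ satisfies $\|A^{\mathbb T}\|\le\sqrt p+\sqrt q$.
   Context: Layers are indexed by distance from the root; the root forms layer $0$ (even). $\|\cdot\|$ denotes the operator norm. *)

From HB Require Import structures.
From mathcomp Require Import all_boot all_order all_algebra.
From mathcomp Require Import classical_sets reals.
Set Implicit Arguments. Unset Strict Implicit. Unset Printing Implicit Defensive.
Import Order.TTheory GRing.Theory Num.Theory.
Local Open Scope ring_scope.
Local Open Scope classical_set_scope.

(* A finite rooted tree on the vertex set 'I_n.+1 with root ord0, encoded by a
   parent map [par] : every non-root vertex i has parent [par i] with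
   [par i < i] (value of [par ord0] is irrelevant). Every finite rooted tree
   admits such a labelling (e.g. BFS order). *)
Definition parent_map (n : nat) (par : 'I_n.+1 -> 'I_n.+1) : Prop :=
  forall i : 'I_n.+1, i != ord0 -> (par i < i)%N.

Definition children (n : nat) (par : 'I_n.+1 -> 'I_n.+1) (v : 'I_n.+1)
  : {set 'I_n.+1} := [set u | (u != ord0) && (par u == v)].

Fixpoint depth_fuel (n : nat) (par : 'I_n.+1 -> 'I_n.+1) (k : nat)
  (i : 'I_n.+1) : nat :=
  if k is k'.+1 then (if i == ord0 then 0%N else (depth_fuel par k' (par i)).+1)
  else 0%N.
Definition depth (n : nat) (par : 'I_n.+1 -> 'I_n.+1) (i : 'I_n.+1) : nat :=
  depth_fuel par n.+1 i.

Definition tree_adj (R : realType) (n : nat) (par : 'I_n.+1 -> 'I_n.+1)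
  : 'M[R]_n.+1 :=
  \matrix_(i, j) (((i != ord0) && (par i == j)) || ((j != ord0) && (par j == i)))%:R.

Definition enorm (R : realType) (m : nat) (x : 'cV[R]_m) : R :=
  Num.sqrt (\sum_i x i ord0 ^+ 2).

Definition opnorm (R : realType) (m : nat) (A : 'M[R]_m) : R :=
  sup [set enorm (A *m x) | x in [set x : 'cV[R]_m | enorm x <= 1]].

(* Split the edges of the tree according to the parity of the layer of the
   parent.  Each class spans a disjoint union of stars, centred at the even
   (resp. odd) vertices, with at most q (resp. p) leaves, and by
   Cauchy-Schwarz a star with d leaves has norm at most sqrt d.  Hence
   A = A_even + A_odd has norm at most sqrt q + sqrt p. *)

From HB Require Import structures.
From mathcomp Require Import all_boot all_order all_algebra.
From mathcomp Require Import classical_sets reals.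
From mathcomp Require Import ring.
Set Implicit Arguments. Unset Strict Implicit. Unset Printing Implicit Defensive.
Import Order.TTheory GRing.Theory Num.Theory.
Local Open Scope ring_scope.

Lemma sqr_sum_le_card (R : realFieldType) (I : finType) (A : {pred I}) (x : I -> R) :
  (\sum_(i in A) x i) ^+ 2 <= #|A|%:R * \sum_(i in A) x i ^+ 2.
Proof.
have card_sum : #|A|%:R * \sum_(i in A) x i ^+ 2 = \sum_(i in A) \sum_(j in A) x j ^+ 2.
  by rewrite sumr_const mulr_natl.
have sqr_sum : (\sum_(i in A) x i) ^+ 2 = \sum_(i in A) \sum_(j in A) x i * x j.
  by rewrite expr2 mulr_suml; under eq_bigr do rewrite mulr_sumr.
rewrite -(@ler_pMn2r _ 2) // !mulr2n {1}card_sum card_sum.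
rewrite [X in _ <= X + _]exchange_big sqr_sum -!big_split /=.
apply: ler_sum => i Ai; rewrite -!big_split /=.
apply: ler_sum => j Aj; rewrite -subr_ge0.
by rewrite (_ : _ - _ = (x i - x j) ^+ 2) ?sqr_ge0 //; ring.
Qed.

(* [star_mul f S x] is [A x] for the adjacency matrix [A] of the graph with
   edges [{c, f c}], [c] in [S]; when no [f c] lies in [S], this graph is a
   disjoint union of stars centred outside [S]. *)
Definition star_mul (R : realFieldType) (T : finType) (f : T -> T) (S : pred T)
    (x : T -> R) (i : T) : R :=
  (if S i then x (f i) else 0) + \sum_(c | S c && (f c == i)) x c.

Lemma eq_star_mul (R : realFieldType) (T : finType) (f : T -> T) (S1 S2 : pred T)
    (x : T -> R) : S1 =1 S2 -> star_mul f S1 x =1 star_mul f S2 x.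
Proof.
by move=> eqS i; rewrite /star_mul eqS; congr (_ + _); apply: eq_bigl => c; rewrite eqS.
Qed.

Lemma star_mul_split (R : realFieldType) (T : finType) (f : T -> T) (S P : pred T)
    (x : T -> R) (i : T) :
  star_mul f S x i =
  star_mul f [pred c | S c && P c] x i + star_mul f [pred c | S c && ~~ P c] x i.
Proof.
rewrite /star_mul addrACA (bigID P) /=; congr (_ + _).
  by case: (S i); case: (P i); rewrite /= ?addr0 ?add0r.
by congr (_ + _); apply: eq_bigl => c; rewrite andbAC.
Qed.

Section StarForest.

Variables (R : realFieldType) (T : finType) (f : T -> T) (S : pred T) (d : nat).
Hypothesis leaf_center : forall c, S c -> ~~ S (f c).
Hypothesis star_deg : forall v, (#|[pred c | S c && (f c == v)]| <= d)%N.

Lemma star_mul_leaf (x : T -> R) i : S i -> star_mul f S x i = x (f i).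
Proof.
move=> Si; rewrite /star_mul Si big_pred0 ?addr0 // => c.
by apply/negP=> /andP[/leaf_center + /eqP fc]; rewrite fc Si.
Qed.

Lemma star_mul_center (x : T -> R) i :
  ~~ S i -> star_mul f S x i = \sum_(c | S c && (f c == i)) x c.
Proof. by move=> /negbTE Si; rewrite /star_mul Si add0r. Qed.

Lemma sum_star_mul_sqr (x : T -> R) :
  \sum_i star_mul f S x i ^+ 2 <= d%:R * \sum_i x i ^+ 2.
Proof.
rewrite (bigID S) [X in _ <= _ * X](bigID S) /= [X in _ <= _ * X]addrC.
under eq_bigr => i Si do rewrite star_mul_leaf //.
under [X in _ + X <= _]eq_bigr => i Si do rewrite star_mul_center //.
rewrite !(partition_big f (predC S) leaf_center) -!big_split mulr_sumr /=.
apply: ler_sum => j Sj; rewrite mulrDr; apply: lerD.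
- rewrite (eq_bigr (fun _ => x j ^+ 2)) => [|c /andP[_ /eqP ->] //].
  rewrite sumr_const -[_ *+ #|_|]mulr_natl; apply: ler_wpM2r; first exact: sqr_ge0.
  by rewrite ler_nat; apply: star_deg.
- apply: le_trans (sqr_sum_le_card _ _) _; apply: ler_wpM2r.
    by apply: sumr_ge0 => c _; apply: sqr_ge0.
  by rewrite ler_nat; apply: star_deg.
Qed.

End StarForest.

Lemma sum_sqr_add_le (R : realFieldType) (I : finType) (a b : I -> R) (u v X : R) :
  0 < u -> 0 < v ->
  \sum_i a i ^+ 2 <= u ^+ 2 * X -> \sum_i b i ^+ 2 <= v ^+ 2 * X ->
  \sum_i (a i + b i) ^+ 2 <= (u + v) ^+ 2 * X.
Proof.
move=> u0 v0 leA leB; have uv0 : 0 < u * v by rewrite mulr_gt0.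
rewrite -(ler_pM2l uv0) mulr_sumr.
have -> : u * v * ((u + v) ^+ 2 * X) = (u + v) * (v * (u ^+ 2 * X) + u * (v ^+ 2 * X)).
  by ring.
have weighted i : u * v * (a i + b i) ^+ 2 <= (u + v) * (v * a i ^+ 2 + u * b i ^+ 2).
  by rewrite -subr_ge0 (_ : _ - _ = (v * a i - u * b i) ^+ 2) ?sqr_ge0 //; ring.
apply: le_trans (ler_sum _ (fun i _ => weighted i)) _.
rewrite -mulr_sumr big_split -!mulr_sumr /=.
apply: ler_wpM2l; first by rewrite addr_ge0 // ltW.
by apply: lerD; apply: ler_wpM2l => //; apply: ltW.
Qed.

Lemma opnorm_le (R : realType) (m : nat) (A : 'M[R]_m) (c : R) : 0 <= c ->
  (forall x : 'cV_m, \sum_i (A *m x) i ord0 ^+ 2 <= c ^+ 2 * \sum_i x i ord0 ^+ 2) ->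
  opnorm A <= c.
Proof.
move=> c0 leAc; apply: ge_sup.
  exists (enorm (A *m 0)); exists 0 => //.
  by rewrite /= /enorm big1 ?sqrtr0 ?ler01 // => i _; rewrite mxE expr0n.
move=> _ [x /= x1 <-]; rewrite /enorm.
apply: le_trans (_ : Num.sqrt (c ^+ 2 * \sum_i x i ord0 ^+ 2) <= _).
  by rewrite ler_sqrt ?leAc // mulr_ge0 ?sqr_ge0 // sumr_ge0 // => i _; apply: sqr_ge0.
by rewrite sqrtrM ?sqr_ge0 // sqrtr_sqr ger0_norm // ler_piMr.
Qed.

Section Tree.

Variables (n : nat) (par : 'I_n.+1 -> 'I_n.+1).
Hypothesis par_lt : parent_map par.

Lemma depth_fuel_stable k (i : 'I_n.+1) :
  (i < k)%N -> depth_fuel par k i = depth_fuel par k.+1 i.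
Proof.
elim: k i => [|k IHk] i //= ltik; case: ifP => // /negbT i0.
by rewrite IHk // (leq_trans (par_lt i0)).
Qed.

Lemma depth_par (i : 'I_n.+1) : i != ord0 -> depth par i = (depth par (par i)).+1.
Proof.
move=> i0; rewrite /depth /= (negbTE i0); congr S; apply: depth_fuel_stable.
by rewrite (leq_trans (par_lt i0)) // -ltnS.
Qed.

Definition edge_parity (b : bool) (c : 'I_n.+1) : bool :=
  (c != ord0) && (odd (depth par (par c)) == b).

Lemma edge_parity_par b c : edge_parity b c -> ~~ edge_parity b (par c).
Proof.
case/andP=> _ /eqP <-; apply/negP=> /andP[pc0].
by rewrite (depth_par pc0) /=; case: odd.
Qed.

Lemma card_edge_parity_fibre b v :
  (#|[pred c | edge_parity b c && (par c == v)]| <=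
   (if odd (depth par v) == b then #|children par v| else 0))%N.
Proof.
case: eqP => [_ | neq_b].
  apply/subset_leq_card/fintype.subsetP => c; rewrite !inE.
  by case/andP=> /andP[-> _] ->.
rewrite leqn0; apply/eqP/eq_card0 => c; rewrite !inE.
by apply/negP=> /andP[/andP[_ /eqP]] + /eqP pc; rewrite pc.
Qed.

Lemma tree_adjE (R : realType) i j :
  tree_adj R par i j = ((i != ord0) && (par i == j))%:R + ((j != ord0) && (par j == i))%:R.
Proof.
rewrite mxE; case: (boolP (_ && _)) => [/andP[i0 /eqP pij] | _]; last by rewrite add0r.
case: (boolP (_ && _)) => [/andP[j0 /eqP pji] | _]; last by rewrite addr0.
by move: (par_lt i0) (par_lt j0); rewrite pij pji => ji /(ltn_trans ji); rewrite ltnn.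
Qed.

Lemma tree_adj_mul (R : realType) (x : 'cV[R]_n.+1) i :
  (tree_adj R par *m x) i ord0 = star_mul par (fun c => c != ord0) (fun j => x j ord0) i.
Proof.
rewrite mxE /star_mul; under eq_bigr do rewrite tree_adjE mulrDl.
rewrite big_split /=; congr (_ + _).
  case: (i != ord0) => /=; last by rewrite big1 // => j _; rewrite mul0r.
  rewrite (bigD1 (par i)) //= eqxx mul1r big1 ?addr0 // => j.
  by rewrite eq_sym => /negbTE ->; rewrite mul0r.
by rewrite [RHS]big_mkcond; apply: eq_bigr => j _; case: ifP; rewrite ?mul1r ?mul0r.
Qed.

Lemma tree_adj_mul_parity (R : realType) (x : 'cV[R]_n.+1) i :
  (tree_adj R par *m x) i ord0 =
  star_mul par (edge_parity true) (fun j => x j ord0) i +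
  star_mul par (edge_parity false) (fun j => x j ord0) i.
Proof.
rewrite tree_adj_mul (star_mul_split _ _ (fun c => odd (depth par (par c)))).
by congr (_ + _); apply: eq_star_mul => c; rewrite /edge_parity /= ?eqb_id ?eqbF_neg.
Qed.

Variables p q : nat.
Hypothesis children_le :
  forall v, (#|children par v| <= (if odd (depth par v) then p else q))%N.

Lemma sum_star_mul_parity_sqr (R : realFieldType) b (x : 'I_n.+1 -> R) :
  \sum_i star_mul par (edge_parity b) x i ^+ 2 <=
  (if b then p else q)%:R * \sum_i x i ^+ 2.
Proof.
apply: sum_star_mul_sqr => [c | v]; first exact: edge_parity_par.
apply: leq_trans (card_edge_parity_fibre b v) _.
by case: eqP => [<- | _]; first exact: children_le.
Qed.

End Tree.

Theorem lemmaC3 (R : realType) (p q : nat) (hp : (0 < p)%N) (hq : (0 < q)%N)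
  (n : nat) (par : 'I_n.+1 -> 'I_n.+1) (htree : parent_map par)
  (hdeg : forall v : 'I_n.+1,
     (#|children par v| <= (if odd (depth par v) then p else q))%N) :
  opnorm (tree_adj R par) <= Num.sqrt (p%:R) + Num.sqrt (q%:R).
Proof.
have sqrt_gt0 k : (0 < k)%N -> 0 < Num.sqrt (k%:R : R) by rewrite sqrtr_gt0 ltr0n.
have sqrt_sqr k : Num.sqrt (k%:R : R) ^+ 2 = k%:R by rewrite sqr_sqrtr.
apply: opnorm_le => [|x]; first by rewrite addr_ge0 ?sqrtr_ge0.
under eq_bigr do rewrite tree_adj_mul_parity //.
apply: sum_sqr_add_le; rewrite ?sqrt_gt0 ?sqrt_sqr //.
- exact: (sum_star_mul_parity_sqr htree hdeg true).
- exact: (sum_star_mul_parity_sqr htree hdeg false).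
Qed.
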